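(* Let $0<c<1$. There is no set $A\subseteq\mathbb{N}$ such that $R_A(n)=cn+o(\sqrt{n})$ as $n\to\infty$.
   Context: $\mathbb{N}$ denotes the set of non-negative integers. For $A\subseteq\mathbb{N}$, $R_A(n)$ denotes the number of ordered pairs $(a,a')$ with $a,a'\in A$ and $a+a'=n$. *)

From Stdlib Require Import Reals Lra Lia List.
Open Scope R_scope.

(* A subset A of N is represented by its (boolean) characteristic function.
   R_A(n) = #{ (a, a') : a, a' in A, a + a' = n } = #{ a in [0, n] : a in A and n - a in A }. *)
Definition RA (A : nat -> bool) (n : nat) : nat :=
  List.length (List.filter (fun a => andb (A a) (A (n - a)%nat)) (List.seq 0 (S n))).

Definition little_o (f g : nat -> R) : Prop :=
  forall eps : R, 0 < eps -> exists N : nat, forall n : nat, (N <= n)%nat ->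
    Rabs (f n) <= eps * Rabs (g n).

From Stdlib Require Import Reals.
From mathcomp Require Import all_boot all_order all_algebra.
From mathcomp Require Import cyclic separable cyclotomic complex reals Rstruct.
From mathcomp Require Import zify ring lra.

(* For s = r^2 < 1 close to 1 and M large, consider the truncated generating
   polynomials P = sum_(a in A, a < M) r^a X^a and G = sum_(a < M) r^a X^a.  For n < M
   the n-th coefficient of E = P^2 - c r X G^2 is r^n (R_A(n) - c n), so the hypothesis
   R_A(n) = c n + o(sqrt n) gives sum_n E_n^2 <= (2 eps / (1 - s))^2 once the tail
   n >= M is made negligible.  Averaging |P(w)|^2 <= c r |G(w)|^2 + |E(w)| over the
   (2M)-th roots of unity w and using Parseval yields
     (1 - s) sum_(a in A, a < M) s^a <= c + 2 eps,
   whereas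
     (sum_(a in A, a < M) s^a)^2 >= sum_(n < M) R_A(n) s^n
                                 >= (c - eps) / (1 - s)^2 - O(1 / (1 - s)).
   For eps = (c - c^2) / 20 the two bounds are incompatible. *)

Set Implicit Arguments.
Unset Strict Implicit.
Unset Printing Implicit Defensive.

Import Order.TTheory GRing.Theory Num.Theory.

Local Open Scope nat_scope.

Definition rep (A : nat -> bool) (n : nat) : nat :=
  \sum_(j < n.+1) (A j && A (n - j)).

Definition rep_below (M : nat) (A : nat -> bool) (n : nat) : nat :=
  \sum_(j < n.+1) [&& j < M, n - j < M, A j & A (n - j)].

Lemma RA_rep A n : RA A n = rep A n.
Proof.
rewrite /RA.
have len_filter (l : seq nat) f :
    List.length (List.filter f l) = \sum_(j <- l) f j.
  by elim: l => [|a l IH] /=; rewrite ?big_nil ?big_cons //; case: (f a); rewrite /= IH.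
have -> : List.seq 0 n.+1 = iota 0 n.+1 by elim: n.+1 0 => //= k IH m; rewrite IH.
by rewrite len_filter /rep -(big_mkord xpredT (fun j => A j && A (n - j) : nat))
  /index_iota subn0.
Qed.

Lemma rep_below_le M A n : rep_below M A n <= n.+1.
Proof.
rewrite -[X in _ <= X]card_ord -sum1_card; apply: leq_sum => j _; exact: leq_b1.
Qed.

Lemma rep_below_small M A n : n < M -> rep_below M A n = rep A n.
Proof.
move=> ltnM; apply: eq_bigr => j _.
have lejn : j <= n by rewrite -ltnS.
by rewrite (leq_ltn_trans lejn ltnM) (leq_ltn_trans (leq_subr j n) ltnM).
Qed.

Lemma rep_le A n : rep A n <= n.+1.
Proof. by rewrite -(rep_below_small A (ltnSn n)) rep_below_le. Qed.

Lemma rep_predT n : rep predT n = n.+1.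
Proof. by rewrite /rep sum1_card card_ord. Qed.

Local Open Scope ring_scope.

Section WeightedPoly.
Variables (R : comNzRingType) (M : nat) (r : R) (A : nat -> bool).

Definition weighted_poly : {poly R} := \poly_(i < M) (r ^+ i *+ A i).

Lemma size_weighted_poly : (size weighted_poly <= M)%N.
Proof. exact: size_poly. Qed.

Lemma coef_weighted_poly_sqr n :
  (weighted_poly * weighted_poly)`_n = r ^+ n *+ rep_below M A n.
Proof.
rewrite coefM -sumrMnr; apply: eq_bigr => j _; rewrite !coef_poly.
have lejn : (j <= n)%N by rewrite -ltnS.
case: (j < M)%N (n - j < M)%N (A j) (A (n - j)) => [] [] [] [];
  by rewrite /= ?mul0r ?mulr0 ?mulr0n // mulr1n -exprD subnKC.
Qed.

End WeightedPoly.

Lemma sum_rep_le_sqr (R : numDomainType) M (s : R) A : 0 <= s ->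
  \sum_(n < M) s ^+ n *+ rep A n <= (\sum_(a < M) s ^+ a *+ A a) ^+ 2.
Proof.
move=> s_ge0; set Q := weighted_poly M s A.
have sizeQQ : (size (Q * Q)%R <= M + M)%N.
  apply: leq_trans (size_polyMleq _ _) _.
  by have := size_weighted_poly M s A; rewrite -/Q; lia.
have -> : \sum_(a < M) s ^+ a *+ A a = Q.[1].
  by rewrite horner_poly; apply: eq_bigr => i _; rewrite expr1n mulr1.
rewrite expr2 -hornerM (horner_coef_wide _ sizeQQ) big_split_ord /=.
under [X in _ <= X + _]eq_bigr => n _ do
  rewrite expr1n mulr1 coef_weighted_poly_sqr rep_below_small //.
rewrite lerDl; apply: sumr_ge0 => n _.
by rewrite expr1n mulr1 coef_weighted_poly_sqr mulrn_wge0 // exprn_ge0.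
Qed.

Lemma prim_root_exists (C : numClosedFieldType) n : (0 < n)%N ->
  exists z : C, n.-primitive_root z.
Proof.
move=> n_gt0; have [r Dp] := closed_field_poly_normal ('X^n - 1 : {poly C}).
rewrite (monicP _) ?monicXnsubC // scale1r in Dp.
have rn1 : all n.-unity_root r by apply/allP=> z; rewrite -root_prod_XsubC -Dp.
have sz_r : (n < (size r).+1)%N by rewrite -(size_prod_XsubC r id) -Dp size_XnsubC.
have [|z] := hasP (has_prim_root n_gt0 rn1 _ sz_r); last by exists z.
by rewrite -separable_prod_XsubC -Dp separable_Xn_sub_1 // pnatr_eq0 -lt0n.
Qed.

Section RootsOfUnity.
Variables (C : numClosedFieldType) (L : nat) (z : C).
Hypothesis z_prim : L.-primitive_root z.

Let L_gt0 : (0 < L)%N := prim_order_gt0 z_prim.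

Lemma sum_prim_root_expr m :
  \sum_(k < L) (z ^+ m) ^+ k = if (L %| m)%N then L%:R else 0.
Proof.
case: ifP => dvd_Lm.
  have -> : z ^+ m = 1 by apply/eqP; rewrite -(prim_order_dvd z_prim).
  by rewrite (eq_bigr (fun=> 1)) => [|k _]; rewrite ?sumr_const ?card_ord ?expr1n.
have zm_neq1 : z ^+ m - 1 != 0 by rewrite subr_eq0 -(prim_order_dvd z_prim) dvd_Lm.
apply: (mulfI zm_neq1); rewrite mulr0 -subrX1 exprAC (prim_expr_order z_prim).
by rewrite expr1n subrr.
Qed.

Lemma norm_prim_root : `|z| = 1.
Proof.
apply/eqP; rewrite -(pexpr_eq1 L_gt0) // -normrX (prim_expr_order z_prim).
by rewrite normr1.
Qed.

Lemma conj_prim_root : z^* = z ^+ L.-1.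
Proof.
have z_neq0 : z != 0 by rewrite -normr_eq0 norm_prim_root oner_neq0.
apply: (mulfI z_neq0); rewrite -normCK norm_prim_root expr1n -exprS prednK //.
by rewrite (prim_expr_order z_prim).
Qed.

Lemma dvdn_addn_predn_mul (i j : 'I_L) : (L %| i + L.-1 * j)%N = (i == j).
Proof.
rewrite /dvdn -(mod0n L) -(eqn_modDr j) add0n -addnA -mulSnr prednK // mulnC.
by rewrite [(i + _)%N]addnC modnMDl !modn_small.
Qed.

Lemma parseval (Q : {poly C}) : (size Q <= L)%N ->
  \sum_(k < L) `|Q.[z ^+ k]| ^+ 2 = L%:R * \sum_(i < L) `|Q`_i| ^+ 2.
Proof.
move=> sizeQ.
have expand (k : 'I_L) : `|Q.[z ^+ k]| ^+ 2 =
    \sum_(i < L) \sum_(j < L) Q`_i * (Q`_j)^* * (z ^+ (i + L.-1 * j)) ^+ k.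
  rewrite normCK (horner_coef_wide _ sizeQ) rmorph_sum mulr_suml.
  apply: eq_bigr => i _; rewrite mulr_sumr; apply: eq_bigr => j _.
  rewrite rmorphM !rmorphXn /= conj_prim_root exprD mulrACA; congr (_ * _).
  by rewrite exprMn -!exprM mulnC; congr (_ * _); rewrite !exprM exprAC.
rewrite (eq_bigr _ (fun k _ => expand k)) exchange_big mulr_sumr.
apply: eq_bigr => i _.
rewrite exchange_big (bigD1 i) //= [X in _ + X]big1 ?addr0 => [|j neq_ji].
  by rewrite -mulr_sumr sum_prim_root_expr dvdn_addn_predn_mul eqxx -normCK mulrC.
rewrite -mulr_sumr sum_prim_root_expr dvdn_addn_predn_mul eq_sym.
by rewrite (negbTE neq_ji) mulr0.
Qed.

Lemma sum_norm_horner_le (Q : {poly C}) (t : C) : (size Q <= L)%N -> 0 < t ->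
  \sum_(i < L) `|Q`_i| ^+ 2 <= t ^+ 2 -> \sum_(k < L) `|Q.[z ^+ k]| <= L%:R * t.
Proof.
move=> sizeQ t_gt0 normQ.
have amgm (k : 'I_L) : `|Q.[z ^+ k]| * (t *+ 2) <= `|Q.[z ^+ k]| ^+ 2 + t ^+ 2.
  by rewrite mulrnAr; apply: real_leif_mean_square_scaled; rewrite ?normr_real ?gtr0_real.
rewrite -(ler_pM2r (pmulrn_rgt0 2 t_gt0)) mulr_suml.
apply: le_trans (ler_sum _ (fun k _ => amgm k)) _.
rewrite big_split /= parseval // sumr_const card_ord.
apply: le_trans (lerD (ler_wpM2l (ler0n C L) normQ) (lexx _)) _.
by rewrite le_eqVlt; apply/orP; left; apply/eqP; ring.
Qed.

End RootsOfUnity.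

Lemma sum_coef_ord_widen (R : nzSemiRingType) (V : nmodType) (f : R -> V)
    (p : {poly R}) m n :
  f 0 = 0 -> (size p <= m)%N -> (m <= n)%N ->
  \sum_(i < n) f p`_i = \sum_(i < m) f p`_i.
Proof.
move=> f0 sizep le_mn.
rewrite [RHS](big_ord_widen _ (fun i => f p`_i) le_mn) [RHS]big_mkcond.
apply: eq_bigr => i _.
by case: ltnP => // /(leq_trans sizep) /(nth_default 0) ->.
Qed.

Lemma size_sqr_sub_scaleX_le (R : nzRingType) M (P G : {poly R}) (lam : R) :
  (0 < M)%N -> (size P <= M)%N -> (size G <= M)%N ->
  (size (P * P - lam *: ('X * (G * G)))%R <= M + M)%N.
Proof.
move=> M_gt0 sizeP sizeG.
have := size_polyMleq P P; have := size_polyMleq G G.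
have := size_polyMleq 'X (G * G); rewrite size_polyX.
have := size_scale_leq lam ('X * (G * G)).
have := size_polyD (P * P) (- (lam *: ('X * (G * G)))); rewrite size_polyN.
(* Naming the sizes lets lia identify terms that differ only in their instance paths. *)
move: sizeP sizeG; set sP := size P; set sG := size G.
set sPP := size (P * P); set sGG := size (G * G).
set sXGG := size ('X * _); set slXGG := size (lam *: ('X * (G * G))).
set sE := size (P * P - lam *: ('X * (G * G))).
lia.
Qed.

Lemma sqr_norm_horner_le (C : numClosedFieldType) (P G : {poly C}) (lam w : C) :
  0 <= lam -> `|w| = 1 ->
  `|P.[w]| ^+ 2 <= lam * `|G.[w]| ^+ 2 + `|(P * P - lam *: ('X * (G * G))).[w]|.
Proof.
move=> lam_ge0 norm_w; set E := _ - _.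
have -> : `|P.[w]| ^+ 2 = `|(lam *: ('X * (G * G)) + E).[w]|.
  by rewrite addrC subrK hornerM normrM expr2.
rewrite hornerD hornerZ !hornerM hornerX; apply: le_trans (ler_normD _ _) _.
by rewrite lerD2r !normrM ger0_norm // norm_w mul1r expr2.
Qed.

Lemma sum_norm_coef_sqr_le (C : numClosedFieldType) M (P G : {poly C}) (lam t : C) :
  (size P <= M)%N -> (size G <= M)%N -> 0 <= lam -> 0 < t ->
  \sum_(i < M + M) `|(P * P - lam *: ('X * (G * G)))`_i| ^+ 2 <= t ^+ 2 ->
  \sum_(i < M) `|P`_i| ^+ 2 <= lam * \sum_(i < M) `|G`_i| ^+ 2 + t.
Proof.
move=> sizeP sizeG lam_ge0 t_gt0 normE.
have [->|M_gt0] := posnP M; first by rewrite !big_ord0 mulr0 add0r ltW.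
have [z z_prim] : exists z : C, (M + M).-primitive_root z.
  by apply: prim_root_exists; rewrite addn_gt0 M_gt0.
have widen (Q : {poly C}) : (size Q <= M)%N ->
    \sum_(i < M + M) `|Q`_i| ^+ 2 = \sum_(i < M) `|Q`_i| ^+ 2.
  by move=> sizeQ; apply: (sum_coef_ord_widen (f := fun x => `|x| ^+ 2));
    rewrite ?normr0 ?expr0n ?leq_addr.
have sizeLP : (size P <= M + M)%N := leq_trans sizeP (leq_addr M M).
have sizeLG : (size G <= M + M)%N := leq_trans sizeG (leq_addr M M).
have LM_gt0 : (0 : C) < (M + M)%:R by rewrite ltr0n addn_gt0 M_gt0.
rewrite -(ler_pM2l LM_gt0) -!widen // -!(parseval z_prim) //.
rewrite mulrDr mulrCA -(parseval z_prim) //.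
have norm_zk k : `|z ^+ k| = 1 by rewrite normrX (norm_prim_root z_prim) expr1n.
apply: le_trans (ler_sum _ (fun (k : 'I_(M + M)) _ =>
  sqr_norm_horner_le P G lam_ge0 (norm_zk k))) _.
rewrite big_split /= -mulr_sumr lerD2l.
exact: sum_norm_horner_le (size_sqr_sub_scaleX_le lam M_gt0 sizeP sizeG) t_gt0 normE.
Qed.

Lemma sum_coef_sqr_le (R : rcfType) M (P G : {poly R}) (lam t : R) :
  (size P <= M)%N -> (size G <= M)%N -> 0 <= lam -> 0 < t ->
  \sum_(i < M + M) (P * P - lam *: ('X * (G * G)))`_i ^+ 2 <= t ^+ 2 ->
  \sum_(i < M) P`_i ^+ 2 <= lam * \sum_(i < M) G`_i ^+ 2 + t.
Proof.
move=> sizeP sizeG lam_ge0 t_gt0 normE.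
have sum_normC (Q : {poly R}) n :
    \sum_(i < n) `|(map_poly (real_complex R) Q)`_i| ^+ 2
    = real_complex R (\sum_(i < n) Q`_i ^+ 2).
  rewrite rmorph_sum; apply: eq_bigr => i _.
  by rewrite coef_map real_normK ?rmorphXn //= /real_complex_def complex_real.
have normEC : \sum_(i < M + M)
    `|(map_poly (real_complex R) (P * P - lam *: ('X * (G * G))))`_i| ^+ 2
    <= real_complex R t ^+ 2 by rewrite sum_normC -rmorphXn lecR.
rewrite rmorphB /= map_polyZ !rmorphM /= map_polyX in normEC.
rewrite -lecR rmorphD rmorphM /= -!sum_normC.
by apply: sum_norm_coef_sqr_le normEC; rewrite ?size_map_poly ?ler0c ?ltcR.
Qed.

Lemma mul1B_sum_expr (R : comNzRingType) (s : R) M :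
  (1 - s) * \sum_(n < M) s ^+ n = 1 - s ^+ M.
Proof. by rewrite -opprB mulNr -subrX1 opprB. Qed.

Lemma mul1B2_sum_natr_expr (R : comNzRingType) (s : R) M :
  (1 - s) ^+ 2 * \sum_(n < M) n%:R * s ^+ n
  = s - M%:R * s ^+ M + (M%:R - 1) * s ^+ M.+1.
Proof.
elim: M => [|M IH]; first by rewrite big_ord0 mulr0 expr1 mul0r subr0 sub0r mulN1r subrr.
by rewrite big_ord_recr mulrDr IH /= -natr1 !exprS; ring.
Qed.

Lemma mul1B_sum_expr_le1 (R : realDomainType) (s : R) M : 0 <= s ->
  (1 - s) * \sum_(n < M) s ^+ n <= 1.
Proof. by move=> s_ge0; rewrite mul1B_sum_expr lerBlDr lerDl exprn_ge0. Qed.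

Lemma mul1B2_sum_natr_expr_le1 (R : realDomainType) (s : R) M : 0 <= s -> s <= 1 ->
  (1 - s) ^+ 2 * \sum_(n < M) n%:R * s ^+ n <= 1.
Proof.
move=> s_ge0 s_le1.
have sM1_le : s ^+ M.+1 <= s ^+ M by rewrite exprS ler_piMl ?exprn_ge0.
have : M%:R * s ^+ M.+1 <= M%:R * s ^+ M by rewrite ler_wpM2l ?ler0n.
have : 0 <= s ^+ M.+1 by rewrite exprn_ge0.
by rewrite mul1B2_sum_natr_expr; lra.
Qed.

Lemma mul1B2_sum_natr_expr_ge (R : realDomainType) (s : R) M : 0 <= s -> (0 < M)%N ->
  s - M%:R * s ^+ M <= (1 - s) ^+ 2 * \sum_(n < M) n%:R * s ^+ n.
Proof.
move=> s_ge0 M_gt0; rewrite mul1B2_sum_natr_expr lerDl mulr_ge0 ?exprn_ge0 //.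
by rewrite subr_ge0 ler1n.
Qed.

Lemma bernoulli_ler (R : realDomainType) (y : R) m : 0 <= y ->
  1 + m%:R * y <= (1 + y) ^+ m.
Proof.
move=> y_ge0; elim: m => [|m IH]; first by rewrite mul0r addr0 expr0.
have : 1 <= (1 + y) ^+ m by rewrite exprn_ege1 // lerDl.
rewrite exprS -natr1; nra.
Qed.

(* With s (1 + y) = 1, Bernoulli gives s^m m y <= 1, hence (4m)^3 s^(4m) <= 64 / (m y^4). *)
Lemma exists_natr_cube_expr_le (R : archiRealFieldType) (s eta : R) :
  0 <= s -> s < 1 -> 0 < eta ->
  exists2 M : nat, (0 < M)%N & M%:R ^+ 3 * s ^+ M <= eta.
Proof.
move=> s_ge0 s_lt1 eta_gt0.
have [->|s_neq0] := eqVneq s 0; first by exists 1%N; rewrite // expr1 mulr0 ltW.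
have s_gt0 : 0 < s by rewrite lt_def s_neq0.
pose y := (1 - s) / s.
have y_gt0 : 0 < y by rewrite divr_gt0 // subr_gt0.
have sy1 : s * (1 + y) = 1 by rewrite /y; field; rewrite gt_eqF.
pose m := (Num.bound (64 / (eta * y ^+ 4))).+1.
have ey_gt0 : 0 < eta * y ^+ 4 by rewrite mulr_gt0 // exprn_gt0.
have m_big : 64 <= m%:R * (eta * y ^+ 4).
  rewrite -ler_pdivrMr //; apply: ltW.
  by apply: lt_le_trans (archi_boundP _) _; rewrite ?ler_nat // divr_ge0 // ltW.
have decay_m : s ^+ m * (m%:R * y) <= 1.
  have : s ^+ m * (1 + y) ^+ m = 1 by rewrite -exprMn sy1 expr1n.
  have := bernoulli_ler m (ltW y_gt0); have : 0 <= s ^+ m by rewrite exprn_ge0.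
  nra.
exists (4 * m)%N; first by rewrite muln_gt0.
have : (s ^+ m * (m%:R * y)) ^+ 4 <= 1.
  apply: exprn_ile1 => //; apply: mulr_ge0; first exact: exprn_ge0.
  by apply: mulr_ge0; [exact: ler0n | exact: ltW].
have -> : (4 * m)%:R ^+ 3 * s ^+ (4 * m) = m%:R ^+ 3 * (s ^+ m) ^+ 4 * 64.
  by rewrite natrM mulnC exprM; ring.
set Z := m%:R ^+ 3 * (s ^+ m) ^+ 4.
have -> : (s ^+ m * (m%:R * y)) ^+ 4 = Z * (m%:R * y ^+ 4) by rewrite /Z; ring.
have : 0 <= Z by apply: mulr_ge0; apply: exprn_ge0; [exact: ler0n | exact: exprn_ge0].
have : 0 < m%:R * y ^+ 4 :> R by rewrite mulr_gt0 ?ltr0n ?exprn_gt0.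
nra.
Qed.

Lemma ge_opp_of_sqr_le (R : realDomainType) (y a K : R) (n : nat) :
  0 <= a -> 0 <= K -> y ^+ 2 <= a ^+ 2 * n%:R + K ^+ 2 -> - (a * n%:R + K) <= y.
Proof.
move=> a_ge0 K_ge0 hy.
have b_ge0 : 0 <= a * n%:R + K by rewrite addr_ge0 ?mulr_ge0.
suff : `|y| <= a * n%:R + K by rewrite ler_norml => /andP [].
rewrite -ler_sqr ?nnegrE // real_normK ?num_real //; apply: le_trans hy _.
have n_le_sqr : n%:R <= n%:R ^+ 2 :> R.
  by rewrite -natrX ler_nat; case: (n) => // m; rewrite expnS leq_pmulr ?expn_gt0.
have : a ^+ 2 * n%:R <= a ^+ 2 * n%:R ^+ 2 by rewrite ler_wpM2l ?sqr_ge0.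
have : 0 <= a * n%:R * K by rewrite !mulr_ge0 ?ler0n.
rewrite sqrrD exprMn; lra.
Qed.

(* 20 eps = c - c^2 forces eps <= 1/80, and then (c + 2 eps)^2 < c - eps - eps^2 / 2. *)
Lemma weighted_bounds_absurd (R : realFieldType) (c eps u x tau K : R) :
  c <= 1 -> 0 < eps -> eps * 20 = c - c ^+ 2 ->
  0 <= u -> u <= c + 2 * eps -> (c - eps) * (1 - x - tau) - K * x <= u ^+ 2 ->
  0 <= tau -> tau <= eps ^+ 2 / 4 -> 0 <= x -> 0 <= K ->
  (K + 1) ^+ 2 * x <= eps ^+ 2 / 4 -> False.
Proof.
move=> c_le1 eps_gt0 eps_def u_ge0 u_le low tau_ge0 tau_le x_ge0 K_ge0 Kx_le.
have u2_le : u ^+ 2 <= (c + 2 * eps) ^+ 2 by rewrite ler_sqr ?nnegrE // (le_trans u_ge0).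
have eps_small : eps <= 1 / 80.
  by have := sqr_ge0 (c - 1 / 2); rewrite expr2 in eps_def *; nra.
have K1x_le : (K + 1) * x <= (K + 1) ^+ 2 * x.
  by rewrite ler_wpM2r // expr2 ler_peMl ?addr_ge0 // lerDr.
have : (c - eps) * (x + tau) <= x + tau by rewrite ler_piMl ?addr_ge0 //; nra.
rewrite expr2 in eps_def u2_le low tau_le K1x_le Kx_le; nra.
Qed.

Section RepresentationError.
Variables (R : realType) (c : R) (A : nat -> bool).
Hypotheses (c_ge0 : 0 <= c) (c_le1 : c <= 1).

Local Notation e n := ((rep A n)%:R - c * n%:R).

Lemma err_sqr_le (eps : R) N :
    (forall n, (N <= n)%N -> `|e n| <= eps * Num.sqrt n%:R) ->
  forall n, e n ^+ 2 <= eps ^+ 2 * n%:R + N%:R ^+ 2.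
Proof.
move=> err_small n; have N2_ge0 : 0 <= N%:R ^+ 2 :> R by rewrite sqr_ge0.
have [le_Nn | lt_nN] := leqP N n.
  have le_e := err_small n le_Nn.
  have : `|e n| ^+ 2 <= (eps * Num.sqrt n%:R) ^+ 2.
    by rewrite ler_sqr ?nnegrE // (le_trans _ le_e).
  rewrite real_normK ?num_real // exprMn sqr_sqrtr ?ler0n //; lra.
have e_le : e n <= N%:R.
  apply: le_trans (_ : (rep A n)%:R <= _); first by rewrite gerBl mulr_ge0 ?ler0n.
  by rewrite ler_nat (leq_trans (rep_le A n)).
have e_ge : - N%:R <= e n.
  have : c * n%:R <= n%:R by rewrite ler_piMl ?ler0n.
  have : n%:R <= N%:R :> R by rewrite ler_nat ltnW.
  have : 0 <= (rep A n)%:R :> R by rewrite ler0n.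
  lra.
have : 0 <= eps ^+ 2 * n%:R by rewrite mulr_ge0 ?sqr_ge0 ?ler0n.
nra.
Qed.

Section WeightedPolys.
Variables (s : R) (M : nat).
Hypotheses (s_ge0 : 0 <= s) (s_le1 : s <= 1).

Let r := Num.sqrt s.
Let P := weighted_poly M r A.
Let G := weighted_poly M r predT.
Let E := P * P - (c * r) *: ('X * (G * G)).
Let S := \sum_(a < M) s ^+ a *+ A a.

Let sqr_r_expr n : (r ^+ n) ^+ 2 = s ^+ n.
Proof. by rewrite -exprM mulnC exprM sqr_sqrtr. Qed.

Lemma coef_errE n : E`_n = r ^+ n *
  ((rep_below M A n)%:R - c * (if n is k.+1 then rep_below M predT k else 0)%:R).
Proof.
rewrite coefB coefZ coefXM !coef_weighted_poly_sqr.
case: n => [|n] /=; first by rewrite mulr0 subr0 expr0 mul1r mulr0 subr0.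
rewrite mulrBr !mulr_natr !mulrnAr exprS.
by congr (_ - _ *+ _); ring.
Qed.

Lemma coef_err_small n : (n < M)%N -> E`_n = r ^+ n * e n.
Proof.
move=> ltnM; rewrite coef_errE rep_below_small //; case: n ltnM => // n ltnM.
by rewrite rep_below_small ?rep_predT // ltnW.
Qed.

Lemma coef_err_sqr_le n : (n < M + M)%N -> E`_n ^+ 2 <= (M + M)%:R ^+ 2 * s ^+ n.
Proof.
move=> ltn2M; rewrite coef_errE exprMn sqr_r_expr mulrC ler_wpM2r ?exprn_ge0 //.
have b_le : ((if n is k.+1 then rep_below M predT k else 0) <= M + M)%N.
  by case: n ltn2M => // n /ltnW; apply: leq_trans (rep_below_le _ _ _).
have a_le : (rep_below M A n <= M + M)%N.
  exact: leq_trans (rep_below_le _ _ _) ltn2M.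
move: a_le b_le; set a := rep_below M A n; set b := (if n is _.+1 then _ else _).
rewrite -(ler_nat R) -[(b <= _)%N](ler_nat R) => a_le b_le.
have cb_le : c * b%:R <= b%:R by rewrite ler_piMl ?ler0n.
have cb_ge0 : 0 <= c * b%:R by rewrite mulr_ge0 ?ler0n.
have a_ge0 : 0 <= a%:R :> R by rewrite ler0n.
rewrite -(real_normK (num_real _)) ler_sqr ?nnegrE ?ler0n // ler_norml.
apply/andP; split; lra.
Qed.

Lemma sum_err_sqr_le (eps K : R) : 0 <= K ->
    (forall n, e n ^+ 2 <= eps ^+ 2 * n%:R + K ^+ 2) ->
  (1 - s) ^+ 2 * \sum_(n < M + M) E`_n ^+ 2
    <= eps ^+ 2 + K ^+ 2 * (1 - s) + 4 * (M%:R ^+ 3 * s ^+ M).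
Proof.
move=> K_ge0 err_sqr; rewrite big_split_ord /= mulrDr.
have x_ge0 : 0 <= 1 - s by rewrite subr_ge0.
have head : \sum_(n < M) E`_n ^+ 2
    <= eps ^+ 2 * \sum_(n < M) n%:R * s ^+ n + K ^+ 2 * \sum_(n < M) s ^+ n.
  rewrite !mulr_sumr -big_split /=; apply: ler_sum => n _.
  rewrite coef_err_small // exprMn sqr_r_expr.
  have := err_sqr n; have := exprn_ge0 n s_ge0; nra.
set A1 := \sum_(n < M) n%:R * s ^+ n in head; set G0 := \sum_(n < M) s ^+ n in head.
have head_scaled : (1 - s) ^+ 2 * \sum_(n < M) E`_n ^+ 2 <= eps ^+ 2 + K ^+ 2 * (1 - s).
  apply: le_trans (ler_wpM2l (sqr_ge0 _) head) _.
  have -> : (1 - s) ^+ 2 * (eps ^+ 2 * A1 + K ^+ 2 * G0)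
      = eps ^+ 2 * ((1 - s) ^+ 2 * A1) + K ^+ 2 * (1 - s) * ((1 - s) * G0) by ring.
  apply: lerD; rewrite -[X in _ <= X]mulr1 ler_wpM2l ?sqr_ge0 ?mulr_ge0 ?sqr_ge0 //.
    exact: mul1B2_sum_natr_expr_le1.
  exact: mul1B_sum_expr_le1.
have tail : \sum_(i < M) E`_(M + i) ^+ 2 <= 4 * (M%:R ^+ 3 * s ^+ M).
  have term (i : 'I_M) : E`_(M + i) ^+ 2 <= (M + M)%:R ^+ 2 * s ^+ M.
    apply: le_trans (coef_err_sqr_le _) _; first by rewrite ltn_add2l.
    by rewrite ler_wpM2l ?sqr_ge0 // ler_wiXn2l // leq_addr.
  apply: le_trans (ler_sum _ (fun i _ => term i)) _.
  rewrite sumr_const card_ord -mulr_natr natrD le_eqVlt.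
  by apply/orP; left; apply/eqP; ring.
apply: lerD head_scaled (le_trans _ tail).
rewrite ler_piMl ?sumr_ge0 // => [i _|]; first exact: sqr_ge0.
by rewrite exprn_ile1 // lerBlDr lerDl.
Qed.

Let sqr_coef_weighted_poly (B : nat -> bool) i : (i < M)%N ->
  (weighted_poly M r B)`_i ^+ 2 = s ^+ i *+ B i.
Proof.
move=> ltiM; rewrite coef_poly ltiM.
by case: (B i); rewrite ?mulr1n ?sqr_r_expr // mulr0n expr0n.
Qed.

Lemma weighted_count_upper (t : R) : 0 < t ->
  \sum_(n < M + M) E`_n ^+ 2 <= t ^+ 2 -> (1 - s) * S <= c + (1 - s) * t.
Proof.
move=> t_gt0 normE.
have r_ge0 : 0 <= r := sqrtr_ge0 s.
have r_le1 : r <= 1 by rewrite /r -sqrtr1 ler_psqrt ?nnegrE ?ler01.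
have cr_ge0 : 0 <= c * r := mulr_ge0 c_ge0 r_ge0.
have := sum_coef_sqr_le (size_weighted_poly M r A) (size_weighted_poly M r predT)
  cr_ge0 t_gt0 normE.
rewrite !(eq_bigr _ (fun i _ => sqr_coef_weighted_poly _ (ltn_ord i))) -/S => le_S.
have x_ge0 : 0 <= 1 - s by rewrite subr_ge0.
apply: le_trans (ler_wpM2l x_ge0 le_S) _; rewrite mulrDr lerD2r mulrCA.
apply: le_trans (ler_wpM2l cr_ge0 (mul1B_sum_expr_le1 M s_ge0)) _.
by rewrite mulr1 ler_piMr.
Qed.

Lemma weighted_count_lower (eps K : R) : (0 < M)%N -> 0 <= K -> eps <= c ->
    (forall n, - (eps * n%:R + K) <= e n) ->
  (c - eps) * (s - M%:R * s ^+ M) - K * (1 - s) <= ((1 - s) * S) ^+ 2.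
Proof.
move=> M_gt0 K_ge0 eps_le_c err_ge.
have low : (c - eps) * \sum_(n < M) n%:R * s ^+ n - K * \sum_(n < M) s ^+ n <= S ^+ 2.
  apply: le_trans (sum_rep_le_sqr M A s_ge0); rewrite !mulr_sumr -sumrB.
  apply: ler_sum => n _; rewrite -mulr_natr.
  have := err_ge n; have := exprn_ge0 n s_ge0; nra.
set A1 := \sum_(n < M) n%:R * s ^+ n in low; set G0 := \sum_(n < M) s ^+ n in low.
rewrite exprMn; apply: le_trans (ler_wpM2l (sqr_ge0 (1 - s)) low).
have -> : (1 - s) ^+ 2 * ((c - eps) * A1 - K * G0)
    = (c - eps) * ((1 - s) ^+ 2 * A1) - K * (1 - s) * ((1 - s) * G0) by ring.
apply: lerB; first by rewrite ler_wpM2l ?subr_ge0 // mul1B2_sum_natr_expr_ge.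
by rewrite -[X in _ <= X]mulr1 ler_wpM2l ?mulr_ge0 ?subr_ge0 // mul1B_sum_expr_le1.
Qed.

Lemma weighted_count_upper_eps (eps K : R) : 0 < eps -> s < 1 -> 0 <= K ->
    (forall n, e n ^+ 2 <= eps ^+ 2 * n%:R + K ^+ 2) ->
    (K + 1) ^+ 2 * (1 - s) <= eps ^+ 2 / 4 -> M%:R ^+ 3 * s ^+ M <= eps ^+ 2 / 4 ->
  (1 - s) * S <= c + 2 * eps.
Proof.
move=> eps_gt0 s_lt1 K_ge0 err_sqr Kx_le M_big.
have x_gt0 : 0 < 1 - s by rewrite subr_gt0.
pose t := 2 * eps / (1 - s).
have xt : (1 - s) * t = 2 * eps by rewrite /t mulrC mulfVK ?gt_eqF.
rewrite -xt; apply: weighted_count_upper.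
  by apply: divr_gt0 => //; apply: mulr_gt0; rewrite ?ltr0n.
rewrite -(ler_pM2l (exprn_gt0 2 x_gt0)) -exprMn xt.
apply: le_trans (sum_err_sqr_le K_ge0 err_sqr) _.
have : K ^+ 2 * (1 - s) <= (K + 1) ^+ 2 * (1 - s).
  by rewrite ler_pM2r // ler_sqr ?nnegrE ?addr_ge0 // lerDl.
move: M_big Kx_le; rewrite !expr2; nra.
Qed.

End WeightedPolys.

Lemma err_bounds_absurd (eps K : R) : 0 < eps -> eps * 20 = c - c ^+ 2 -> 0 <= K ->
  (forall n, e n ^+ 2 <= eps ^+ 2 * n%:R + K ^+ 2) -> False.
Proof.
move=> eps_gt0 eps_def K_ge0 err_sqr.
have err_ge n := ge_opp_of_sqr_le (ltW eps_gt0) K_ge0 (err_sqr n).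
have eps_le_c : eps <= c by have := sqr_ge0 c; rewrite expr2 in eps_def *; nra.
have eps2_gt0 : 0 < eps ^+ 2 / 4 by rewrite divr_gt0 ?exprn_gt0 ?ltr0n.
pose x := eps ^+ 2 / 4 / (K + 1) ^+ 2.
have K1_gt0 : 0 < (K + 1) ^+ 2 by rewrite exprn_gt0 // ltr_wpDl.
have x_gt0 : 0 < x by rewrite divr_gt0.
have x_def : (K + 1) ^+ 2 * x = eps ^+ 2 / 4 by rewrite mulrC mulfVK ?gt_eqF.
have x_le1 : x <= 1.
  have : 1 <= (K + 1) ^+ 2 by rewrite exprn_ege1 // lerDr.
  have : eps <= 1 := le_trans eps_le_c c_le1.
  rewrite expr2 in x_def; nra.
pose s := 1 - x.
have x_eq : 1 - s = x by rewrite /s opprB addrC subrK.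
have s_ge0 : 0 <= s by rewrite subr_ge0.
have s_lt1 : s < 1 by rewrite gtrBl.
have [M M_gt0 M_big] := exists_natr_cube_expr_le s_ge0 s_lt1 eps2_gt0.
have tau_le : M%:R * s ^+ M <= eps ^+ 2 / 4.
  apply: le_trans M_big; rewrite ler_wpM2r ?exprn_ge0 // -natrX ler_nat.
  by rewrite expnS leq_pmulr // expn_gt0 M_gt0.
have Kx_le : (K + 1) ^+ 2 * (1 - s) <= eps ^+ 2 / 4 by rewrite x_eq x_def.
have := weighted_count_upper_eps s_ge0 (ltW s_lt1) eps_gt0 s_lt1 K_ge0 err_sqr Kx_le M_big.
rewrite x_eq => up.
have := weighted_count_lower s_ge0 (ltW s_lt1) M_gt0 K_ge0 eps_le_c err_ge.
rewrite x_eq => low.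
apply: (weighted_bounds_absurd c_le1 eps_gt0 eps_def _ up low _ tau_le (ltW x_gt0) K_ge0).
- by rewrite mulr_ge0 ?(ltW x_gt0) ?sumr_ge0 // => a _; rewrite mulrn_wge0 ?exprn_ge0.
- by rewrite mulr_ge0 ?ler0n ?exprn_ge0.
- by rewrite x_def.
Qed.

End RepresentationError.

Theorem rep_not_linear_plus_o_sqrt (R : realType) (c : R) (A : nat -> bool) :
  0 < c -> c < 1 ->
  ~ (forall eps : R, 0 < eps -> exists N : nat, forall n, (N <= n)%N ->
       `|(rep A n)%:R - c * n%:R| <= eps * Num.sqrt n%:R).
Proof.
move=> c_gt0 c_lt1 err_small.
pose eps := (c - c ^+ 2) / 20.
have eps_def : eps * 20 = c - c ^+ 2 by rewrite /eps mulfVK ?pnatr_eq0.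
have eps_gt0 : 0 < eps by rewrite /eps divr_gt0 ?ltr0n // subr_gt0 expr2 gtr_pMr.
have [N err_small_N] := err_small eps eps_gt0.
have err_sqr := err_sqr_le (ltW c_gt0) (ltW c_lt1) err_small_N.
exact: (err_bounds_absurd (ltW c_gt0) (ltW c_lt1) eps_gt0 eps_def (ler0n R N) err_sqr).
Qed.

Unset Implicit Arguments.
Local Open Scope R_scope.

Theorem theorem10 (c : R) (hc0 : 0 < c) (hc1 : c < 1) :
  ~ exists A : nat -> bool,
      little_o (fun n => INR (RA A n) - c * INR n) (fun n => sqrt (INR n)).
Proof.
move=> [A small_err].
apply: (rep_not_linear_plus_o_sqrt (introT RltP hc0) (introT RltP hc1) (A := A)).
move=> eps /RltP /small_err [N err_le]; exists N => n /ssrnat.leP /err_le /RleP.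
by rewrite RA_rep !RabsE RsqrtE !INRE (ger0_norm (sqrtr_ge0 _)).
Qed.
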